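(* Let $p>2$, $\mathcal{G}\in\mathbf{G}$, and let $u\in H^1(\mathcal{G})$, $u>0$ on $\mathcal G$, solve $u''+u^{p-1}=\lambda u$ on every edge for some $\lambda\in\mathbb{R}$, with the Kirchhoff condition at every vertex. Then \[ \|u\|_{L^\infty(\mathcal G)}\le\left(\frac p2\lambda+\frac{p\pi^2}{2e_0^2}\right)^{\frac1{p-2}} . \]
   Context: $\mathbf{G}$: connected metric graphs with at most countably many edges, finite vertex degrees and $e_0:=\inf_{e}|e|>0$ (the infimum of the edge lengths). Kirchhoff condition: at each vertex the sum of the outgoing derivatives of $u$ along incident edges is zero. *)

From HB Require Import structures.
From mathcomp Require Import all_boot all_order all_algebra.
From mathcomp Require Import all_classical all_reals all_analysis.
From Stdlib Require Import Relations.Relation_Operators.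
Set Implicit Arguments. Unset Strict Implicit. Unset Printing Implicit Defensive.
Import Order.TTheory GRing.Theory Num.Theory.
Import numFieldNormedType.Exports.
Local Open Scope classical_set_scope.
Local Open Scope ring_scope.

(* A metric graph is encoded by a vertex type V, a countable edge type E,
   edge lengths len e in (0, +oo] (len e = +oo : half-line), an origin
   vertex orig e for each edge, and a terminal vertex term e (only meaningful
   when len e < +oo).  Edge e is identified with the interval
   [0, len e] (resp. [0, +oo)), x = 0 at orig e, x = len e at term e.
   Loops and multiple edges are allowed. *)

Section Graphs.
Variables (R : realType) (V : Type) (E : countType).
Variables (len : E -> \bar R) (orig term : E -> V).

Definition edge_set (e : E) : set R := [set x | 0 <= x /\ (x%:E <= len e)%E].
Definition edge_int (e : E) : set R := [set x | 0 < x /\ (x%:E < len e)%E].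

Definition adjacent (v w : V) : Prop :=
  exists e, (len e < +oo)%E /\
    ((orig e = v /\ term e = w) \/ (orig e = w /\ term e = v)).

Definition graph_connected : Prop :=
  forall v w : V, clos_refl_trans V adjacent v w.

Definition e0 : \bar R := ereal_inf [set len e | e in [set: E]].

Definition in_class_G : Prop :=
  [/\ [set: E] !=set0,
      (forall e, (0 < len e)%E),
      graph_connected,
      (forall v, finite_set [set e | orig e = v] /\
                 finite_set [set e | (len e < +oo)%E /\ term e = v]) &
      (0 < e0)%E].

Definition right_deriv (f : R -> R) (a d : R) : Prop :=
  (fun h => h^-1 * (f (a + h) - f a)) @ 0^'+ --> d.
Definition left_deriv (f : R -> R) (a d : R) : Prop :=
  (fun h => h^-1 * (f a - f (a - h))) @ 0^'+ --> d.

Variable u : E -> R -> R.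

(* u is an H^1(G) function: continuous on each closed edge, continuous at
   the vertices, and sum over edges of (||u_e||_2^2 + ||u_e'||_2^2) finite.
   (u is assumed differentiable in the interior of the edges, see below.) *)
Definition H1_graph : Prop :=
  [/\ (forall e, {within edge_set e, continuous (u e)}),
      (exists phi : V -> R, forall e, u e 0 = phi (orig e) /\
          ((len e < +oo)%E -> u e (fine (len e)) = phi (term e))) &
      (\esum_(e in [set: E])
         (\int[lebesgue_measure]_(x in edge_set e)
            ((u e x) ^+ 2 + (derive1 (u e) x) ^+ 2)%:E) < +oo)%E].

Definition solves_NLS (p lambda : R) : Prop :=
  forall e x, edge_int e x ->
    [/\ derivable (u e) x 1, derivable (derive1 (u e)) x 1 &
        derive1 (derive1 (u e)) x + (u e x) `^ (p - 1) = lambda * u e x].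

(* Kirchhoff condition: sum of outgoing derivatives at each vertex is 0.
   Outgoing derivative at the origin of e is u_e'(0+), at the terminal
   vertex it is -u_e'(len e -). *)
Definition kirchhoff : Prop :=
  exists d0 d1 : E -> R,
    [/\ (forall e, right_deriv (u e) 0 (d0 e)),
        (forall e, (len e < +oo)%E -> left_deriv (u e) (fine (len e)) (d1 e)) &
        (forall v, (\sum_(e \in [set e | orig e = v]) d0 e
                   - \sum_(e \in [set e | (len e < +oo)%E /\ term e = v]) d1 e)
                   = 0)].

End Graphs.

From mathcomp Require Import all_boot all_order all_algebra.
From mathcomp Require Import all_classical all_reals all_analysis.
From mathcomp Require Import ring lra.

Set Implicit Arguments.
Unset Strict Implicit.
Unset Printing Implicit Defensive.
Import Order.TTheory GRing.Theory Num.Theory.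
Import numFieldNormedType.Exports.
Local Open Scope classical_set_scope.
Local Open Scope ring_scope.

(* On an edge [0, L], a positive solution f conserves the energy
   f'^2 + (2/p) f^p - lam f^2.  Comparing with the energy at a maximum point
   xs of f, with M = f xs, gives f'^2 >= K (M^2 - f^2) for
   K = (2/p) M^(p-2) - lam.  If K > 0, then xs is the only point where f = M,
   and the phase acos (f / M), which lies in [0, pi/2), moves with speed at
   least sqrt K away from xs; hence both pieces of [0, L] cut at xs are no
   longer than pi / (2 sqrt K), i.e. K L^2 <= pi^2.  Applied to an edge of
   length at least e0 (or to arbitrarily long pieces of a half-line) and to
   M >= u x, this bounds u x ^ (p-2) by B. *)

Section RealLemmas.
Variable R : realType.

Lemma within_itvcc_le_of_itvoo (h : R -> R) (a b C : R) : a < b ->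
  {within `[a, b], continuous h} -> {in `]a, b[, forall x, h x <= C} ->
  {in `[a, b], forall x, h x <= C}.
Proof.
move=> ab /(continuous_within_itvP _ ab)[_ ha hb] hC x.
rewrite in_itv /= le_eqVlt => /andP[/predU1P[<- _|ax]].
  apply: (closed_cvg _ (@closed_le _ C) _ _ ha).
  near=> y; apply: hC; rewrite in_itv /=; apply/andP; split; near: y.
    exact: nbhs_right_gt.
  exact: nbhs_right_lt.
rewrite le_eqVlt => /predU1P[->|xb]; last by apply: hC; rewrite in_itv /= ax xb.
apply: (closed_cvg _ (@closed_le _ C) _ _ hb).
near=> y; apply: hC; rewrite in_itv /=; apply/andP; split; near: y.
  exact: nbhs_left_gt.
exact: nbhs_left_lt.
Unshelve. all: by end_near. Qed.

Lemma derive1_itvoo_cst (g : R -> R) (a b c : R) :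
  {in `]a, b[, forall x, g x = c} -> {in `]a, b[, forall x, derive1 g x = 0}.
Proof.
move=> g_cst x x_in; rewrite derive1E (@near_eq_derive _ _ _ g (cst c)).
  exact: derive_cst.
by near=> y; apply: g_cst; near: y; exact: near_in_itvoo.
Unshelve. all: by end_near. Qed.

Lemma acos_lt_pihalf (x : R) : 0 < x <= 1 -> acos x < pi / 2.
Proof.
move=> /andP[x_gt0 x_le1].
have x_in : -1 <= x <= 1 by rewrite x_le1 (le_trans _ (ltW x_gt0)) ?lerN10.
have pihalf_in : (pi : R) / 2 \in `[0, pi].
  by rewrite in_itv /= divr_ge0 ?pi_ge0 // ler_pdivrMr // ler_peMr ?pi_ge0 ?ler1n.
have acos_in : acos x \in `[0, pi] by rewrite in_itv /= acos_ge0 ?acos_lepi.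
by rewrite -(ltr_cos acos_in pihalf_in) acosK ?cos_pihalf // in_itv.
Qed.

Lemma acos_phase_gap (w w' : R -> R) (k a b : R) : a < b -> 0 <= k ->
  {within `[a, b], continuous w} -> {in `[a, b], forall x, 0 < w x < 1} ->
  {in `]a, b[, forall x : R, is_derive x 1 w (w' x)} ->
  {in `]a, b[, forall x, k ^+ 2 * (1 - w x ^+ 2) <= w' x ^+ 2} ->
  k * (b - a) < pi / 2.
Proof.
move=> ab k_ge0 w_cont w_in w_der w'_ge.
have w_in' x : x \in `[a, b] -> -1 < w x < 1.
  by move=> /w_in /andP[w_gt0 ->]; rewrite andbT (lt_trans _ w_gt0) ?ltrN10.
have acos_cont : {within `[a, b], continuous (acos \o w)}.
  apply/subspace_continuousP => x x_in.
  apply: (continuous_cvg _ (continuous_acos (w_in' x x_in))).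
  exact: (subspace_continuousP _ _).1 w_cont x x_in.
pose s x := Num.sqrt (1 - w x ^+ 2).
have acos_der x : x \in `]a, b[ -> is_derive x 1 (acos \o w) (- (s x)^-1 * w' x).
  move=> x_in; apply: is_derive1_comp; last exact: w_der.
  by apply: is_derive1_acos; apply: w_in'; rewrite subset_itv_oo_cc.
have [c c_in acos_incr] := MVT ab acos_der acos_cont.
have /andP[wc_gt0 wc_lt1] := w_in c (subset_itv_oo_cc c_in).
have sc_gt0 : 0 < s c by rewrite sqrtr_gt0 subr_gt0 expr_lt1 // ltW.
have k_le : k <= `|- (s c)^-1 * w' c|.
  rewrite normrM normrN normfV (gtr0_norm sc_gt0) mulrC ler_pdivlMr //.
  rewrite -(@ler_pXn2r _ 2) ?nnegrE ?normr_ge0 ?mulr_ge0 ?(ltW sc_gt0) //.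
  rewrite real_normK ?num_real // exprMn sqr_sqrtr ?w'_ge //.
  by rewrite subr_ge0 expr_le1 ?ltW.
have acos_range x : x \in `[a, b] -> 0 <= acos (w x) < pi / 2.
  move=> /w_in /andP[w_gt0 w_lt1]; rewrite acos_lt_pihalf ?w_gt0 ?(ltW w_lt1) //.
  by rewrite acos_ge0 // (ltW w_lt1) (le_trans _ (ltW w_gt0)) ?lerN10.
have /andP[acos_a_ge0 acos_a_lt] : 0 <= acos (w a) < pi / 2.
  by apply: acos_range; rewrite in_itv /= lexx ltW.
have /andP[acos_b_ge0 acos_b_lt] : 0 <= acos (w b) < pi / 2.
  by apply: acos_range; rewrite in_itv /= lexx ltW.
have : k * (b - a) <= `|acos (w b) - acos (w a)|.
  rewrite [X in `|X|]acos_incr normrM [`|b - a|]gtr0_norm ?subr_gt0 //.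
  by rewrite ler_wpM2r // subr_ge0 ltW.
move=> /le_lt_trans; apply; rewrite ltr_norml; apply/andP; split; lra.
Qed.

Lemma powR_subrK (a b y : R) : 0 < y -> y `^ a = y `^ (a - b) * y `^ b.
Proof. by move=> y_gt0; rewrite -powRD ?subrK // (gt_eqF y_gt0) implybT. Qed.

Lemma le_powRV_of_powR_le (y q c : R) :
  0 < y -> 0 < q -> y `^ q <= c -> y <= c `^ q^-1.
Proof.
move=> y_gt0 q_gt0 le_c.
rewrite -[y](powRr1 (ltW y_gt0)) -(mulfV (lt0r_neq0 q_gt0)) powRrM.
apply: ge0_ler_powR => //; rewrite ?invr_ge0 ?(ltW q_gt0) // nnegrE ?powR_ge0 //.
exact: le_trans (powR_ge0 _ _) le_c.
Qed.

Lemma le0_of_bounded_mulr_sqr (a b c : R) :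
  (forall L, a <= L -> c * L ^+ 2 <= b) -> c <= 0.
Proof.
move=> bounded; rewrite leNgt; apply/negP => c_gt0.
pose m := Num.max a 1; pose L := m + `|b| / c.
have m_ge1 : 1 <= m by rewrite le_max lexx orbT.
have L_ge1 : 1 <= L by rewrite ler_wpDr // divr_ge0 // ltW.
have cL : c * L = c * m + `|b| by rewrite mulrDr mulrCA divff ?mulr1 ?lt0r_neq0.
have cL_le : c * L <= c * L ^+ 2.
  by rewrite expr2 mulrA ler_peMr // mulr_ge0 // ltW // (lt_le_trans ltr01).
have c_le : c <= c * m by rewrite ler_peMr // ltW.
have : a <= L by rewrite ler_wpDr ?divr_ge0 ?normr_ge0 ?(ltW c_gt0) // le_max lexx.
move=> /bounded; have := ler_norm b; lra.
Qed.

Lemma le_of_scaled_subr_le (p lam m c : R) : 0 < p ->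
  2 / p * m - lam <= c -> m <= p / 2 * lam + p / 2 * c.
Proof.
move=> p_gt0 /(ler_wpM2l (divr_ge0 (ltW p_gt0) (ler0n _ 2))).
have -> : p / 2 * (2 / p * m - lam) = m - p / 2 * lam by field; exact: lt0r_neq0.
by rewrite lerBlDl.
Qed.

End RealLemmas.

Section EdgeProfile.
Variables (R : realType) (p lam L : R) (f : R -> R).
Hypothesis p_gt2 : 2 < p.
Hypothesis L_gt0 : 0 < L.
Hypothesis f_cont : {within `[0, L], continuous f}.
Hypothesis f_derivable : {in `]0, L[, forall x : R, derivable f x 1}.
Hypothesis f'_derivable : {in `]0, L[, forall x : R, derivable (derive1 f) x 1}.
Hypothesis f_ode :
  {in `]0, L[, forall x, derive1 (derive1 f) x + f x `^ (p - 1) = lam * f x}.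
Hypothesis f_gt0 : {in `[0, L], forall x, 0 < f x}.

Let p_gt0 : 0 < p. Proof. exact: lt_trans p_gt2. Qed.

Let mid_in : L / 2 \in `]0, L[.
Proof. by have := mid_in_itvoo L_gt0; rewrite add0r. Qed.

Definition potential (y : R) := 2 / p * y `^ p - lam * y ^+ 2.
Definition energy (x : R) := derive1 f x ^+ 2 + potential (f x).

Lemma is_derive_potential (y : R) : 0 < y ->
  is_derive y 1 potential (2 * (y `^ (p - 1) - lam * y)).
Proof.
move=> y_gt0.
have -> : potential = (2 / p) \*: (@powR R) ^~ p - lam \*: (id ^+ 2) by [].
apply: (is_derive_eq (is_deriveB (is_deriveZ _ (is_derive1_powR p y_gt0))
  (is_deriveZ _ (is_deriveX 2 (is_derive_id y 1))))).
rewrite /= expr1 -![_ *: _]/(_ * _) mulr1.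
by field; exact: lt0r_neq0.
Qed.

Lemma is_derive_energy (x : R) : x \in `]0, L[ -> is_derive x 1 energy 0.
Proof.
move=> x_in; have fx_gt0 := f_gt0 (subset_itv_oo_cc x_in).
have f_der := derivableP (f_derivable x_in); rewrite -derive1E in f_der.
have f'_der := derivableP (f'_derivable x_in); rewrite -derive1E in f'_der.
have -> : energy = derive1 f ^+ 2 + (potential \o f) by [].
have h := is_deriveD (is_deriveX 2 f'_der)
  (is_derive1_comp (is_derive_potential fx_gt0) f_der).
apply: (is_derive_eq h); rewrite -[_ *: _]/(_ * _) /= expr1.
have -> : derive1 (derive1 f) x = lam * f x - f x `^ (p - 1).
  by rewrite -(f_ode x_in) addrK.
by ring.
Qed.

Lemma energy_const (x y : R) :
  x \in `]0, L[ -> y \in `]0, L[ -> energy x = energy y.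
Proof.
wlog xy : x y / x <= y.
  by move=> H x_in y_in; case: (leP x y) => [/H|/ltW /H] ->.
move=> x_in y_in.
have sub : {subset `[x, y] <= `]0, L[}.
  by apply: interval.subset_itv; rewrite bnd_simp ?(itvP x_in) ?(itvP y_in).
have energy_der z : z \in `]x, y[ -> is_derive z 1 energy 0.
  by move=> z_in; apply: is_derive_energy; apply/sub/subset_itv_oo_cc.
have [|c _] := MVT_segment xy energy_der.
  by apply: derivable_within_continuous => z /sub /is_derive_energy [].
by rewrite mul0r => /eqP; rewrite subr_eq0 => /eqP.
Qed.

Lemma potential_le_energy (x : R) :
  x \in `[0, L] -> potential (f x) <= energy (L / 2).
Proof.
apply: (within_itvcc_le_of_itvoo (h := potential \o f) L_gt0).
  apply/subspace_continuousP => y y_in.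
  have potential_cont : {for f y, continuous potential}.
    apply/differentiable_continuous/derivable1_diffP.
    by case: (is_derive_potential (f_gt0 y_in)).
  apply: (continuous_cvg _ potential_cont).
  exact: (subspace_continuousP _ _).1 f_cont y y_in.
move=> y y_in; rewrite (energy_const mid_in y_in) /energy /=.
by rewrite lerDr sqr_ge0.
Qed.

Section Maximum.
Variable xs : R.
Hypothesis xs_in : xs \in `[0, L].
Hypothesis xs_max : {in `[0, L], forall x, f x <= f xs}.
Let M := f xs.
Let K := 2 / p * M `^ (p - 2) - lam.
Hypothesis K_gt0 : 0 < K.

Let M_gt0 : 0 < M. Proof. exact: f_gt0. Qed.

Lemma derive1_sqr_ge (x : R) :
  x \in `]0, L[ -> K * (M ^+ 2 - f x ^+ 2) <= derive1 f x ^+ 2.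
Proof.
move=> x_in; have x_in' := subset_itv_oo_cc x_in.
have fx_gt0 := f_gt0 x_in'.
have := potential_le_energy xs_in.
rewrite -(energy_const x_in mid_in) /energy /potential -/M.
rewrite (powR_subrK p 2 M_gt0) (powR_subrK p 2 fx_gt0).
rewrite !powR_mulrn ?(ltW M_gt0) ?(ltW fx_gt0) //.
have powp2_le : f x `^ (p - 2) <= M `^ (p - 2).
  apply: ge0_ler_powR; rewrite ?nnegrE ?subr_ge0 ?(ltW p_gt2) ?xs_max //.
  - exact: ltW.
  - exact: ltW.
have : 2 / p * (f x `^ (p - 2) * f x ^+ 2) <= 2 / p * (M `^ (p - 2) * f x ^+ 2).
  by rewrite ler_wpM2l ?divr_ge0 ?(ltW p_gt0) // ler_wpM2r ?sqr_ge0.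
rewrite /K; lra.
Qed.

Lemma derive1_neq0 (x : R) : x \in `]0, L[ -> f x < M -> derive1 f x != 0.
Proof.
move=> x_in fx_lt; apply/eqP => f'x0; have := derive1_sqr_ge x_in.
have fx_gt0 := f_gt0 (subset_itv_oo_cc x_in).
rewrite f'x0 expr0n /= leNgt => /negP; apply; apply: mulr_gt0 => //.
by rewrite subr_gt0 ltr_pXn2r ?nnegrE ?ltW.
Qed.

(* On a plateau f'' = 0, so the equation gives M^(p-2) = lam, and then
   K = (2/p - 1) lam < 0. *)
Lemma max_not_cst (a b : R) : 0 <= a -> a < b -> b <= L ->
  ~ {in `]a, b[, forall x, f x = M}.
Proof.
move=> a_ge0 ab b_le f_cst.
have sub : {subset `]a, b[ <= `]0, L[}.
  by apply: interval.subset_itv; rewrite bnd_simp.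
have f''0 := derive1_itvoo_cst (derive1_itvoo_cst f_cst).
have mid_ab := mid_in_itvoo ab.
have := f_ode (sub _ mid_ab); rewrite f''0 // f_cst // add0r.
rewrite (powR_subrK (p - 1) (p - 2) M_gt0) (_ : p - 1 - (p - 2) = 1); last by ring.
rewrite powRr1 ?(ltW M_gt0) // mulrC => /(mulIf (lt0r_neq0 M_gt0)) Mp2_eq.
have lam_gt0 : 0 < lam by rewrite -Mp2_eq powR_gt0.
have : 2 / p < 1 by rewrite ltr_pdivrMr // mul1r.
by move: K_gt0; rewrite /K Mp2_eq; nra.
Qed.

Lemma max_no_dip (a b y : R) : 0 <= a -> a < b -> b <= L ->
  f a = M -> f b = M -> y \in `]a, b[ -> M <= f y.
Proof.
move=> a_ge0 ab b_le fa fb y_in; rewrite leNgt; apply/negP => fy_lt.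
have sub : {subset `]a, b[ <= `]0, L[}.
  by apply: interval.subset_itv; rewrite bnd_simp.
have f_cont_ab : {within `[a, b], continuous f}.
  apply: continuous_subspaceW f_cont.
  by apply/subset_itvP/interval.subset_itv; rewrite bnd_simp.
have [d d_in d_min] := EVT_min (ltW ab) f_cont_ab.
have fd_lt : f d < M by apply: le_lt_trans fy_lt; apply/d_min/subset_itv_oo_cc.
have d_in' : d \in `]a, b[.
  rewrite in_itv /= !lt_neqAle !(itvP d_in) !andbT.
  apply/andP; split; apply/eqP.
    by move=> a_d; move: fd_lt; rewrite -a_d fa ltxx.
  by move=> d_b; move: fd_lt; rewrite d_b fb ltxx.
have f'd0 : is_derive d 1 f 0.
  apply: derive1_at_min (ltW ab) _ d_in' _ => [t /sub /f_derivable //|t t_in].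
  exact/d_min/subset_itv_oo_cc.
by move: (derive1_neq0 (sub _ d_in') fd_lt); rewrite derive1E derive_val eqxx.
Qed.

Lemma max_unique (x : R) : x \in `[0, L] -> f x = M -> x = xs.
Proof.
suff no_two_max (a b : R) : a < b -> a \in `[0, L] -> b \in `[0, L] ->
    f a = M -> f b = M -> False.
  move=> x_in fx; case: (ltgtP x xs) => // [x_lt|x_gt].
    by case: (no_two_max _ _ x_lt x_in xs_in fx).
  by case: (no_two_max _ _ x_gt xs_in x_in).
move=> ab a_in b_in fa fb.
have a_ge0 : 0 <= a by rewrite (itvP a_in).
have b_le : b <= L by rewrite (itvP b_in).
have sub : {subset `]a, b[ <= `[0, L]}.
  by apply: interval.subset_itv; rewrite bnd_simp.
apply: (max_not_cst a_ge0 ab b_le) => y y_in.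
by apply/eqP; rewrite eq_le (max_no_dip a_ge0 ab b_le fa fb y_in) xs_max ?sub.
Qed.

Lemma lt_max (x : R) : x \in `[0, L] -> x != xs -> f x < M.
Proof.
move=> x_in x_neq; rewrite lt_neqAle xs_max // andbT.
by apply: contra x_neq => /eqP /(max_unique x_in) ->.
Qed.

Lemma phase_gap (a b : R) : 0 <= a -> a < b -> b <= L -> xs \notin `[a, b] ->
  Num.sqrt K * (b - a) < pi / 2.
Proof.
move=> a_ge0 ab b_le xs_out.
have sub_cc : {subset `[a, b] <= `[0, L]}.
  by apply: interval.subset_itv; rewrite bnd_simp.
have sub_oo : {subset `]a, b[ <= `]0, L[}.
  by apply: interval.subset_itv; rewrite bnd_simp.
apply: (@acos_phase_gap _ (fun x => M^-1 * f x) (fun x => M^-1 * derive1 f x)).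
- exact: ab.
- exact: sqrtr_ge0.
- have f_cont_ab := continuous_subspaceW ((subset_itvP _ _).1 sub_cc) f_cont.
  by move=> x; apply: continuousM (f_cont_ab x); exact: cst_continuous.
- move=> x x_in; have x_in' := sub_cc _ x_in.
  rewrite mulr_gt0 ?invr_gt0 ?f_gt0 //= mulrC ltr_pdivrMr // mul1r.
  by apply: lt_max => //; apply: contraNneq xs_out => <-.
- move=> x /sub_oo x_in; apply: is_deriveZ.
  by rewrite derive1E; apply: derivableP; exact: f_derivable.
- move=> x /sub_oo x_in; rewrite sqr_sqrtr ?(ltW K_gt0) // !exprMn.
  have -> : K * (1 - M^-1 ^+ 2 * f x ^+ 2) =
      M^-1 ^+ 2 * (K * (M ^+ 2 - f x ^+ 2)).
    by field; exact: lt0r_neq0.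
  by rewrite ler_wpM2l ?sqr_ge0 ?derive1_sqr_ge.
Qed.

(* One of [0, xs] and [xs, L] has length at least L / 2; since phase_gap
   needs an interval avoiding xs, we shrink it by the margin d. *)
Lemma sqrtK_mul_len_le_pi : Num.sqrt K * L <= pi.
Proof.
set k := Num.sqrt K; have k_gt0 : 0 < k by rewrite sqrtr_gt0.
have pi_gt0 := pi_gt0 R.
rewrite leNgt; apply/negP => pi_lt.
pose d := (k * L - pi) / (2 * k).
have kd : k * d = (k * L - pi) / 2 by rewrite /d; field; exact: lt0r_neq0.
have d_gt0 : 0 < d by rewrite divr_gt0 ?subr_gt0 ?mulr_gt0.
have [xs_ge0 xs_le] : 0 <= xs /\ xs <= L by rewrite !(itvP xs_in).
case: (leP xs (L / 2)) => xs_half.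
  have kxs := ler_wpM2l (ltW k_gt0) xs_half.
  have : k * (L - (xs + d)) < pi / 2.
    apply: phase_gap (lexx L) _.
    - exact: addr_ge0 xs_ge0 (ltW d_gt0).
    - by rewrite -(ltr_pM2l k_gt0) mulrDr kd; lra.
    - by rewrite in_itv /= negb_and -ltNge ltrDl d_gt0.
  by lra.
have kxs := ler_wpM2l (ltW k_gt0) (ltW xs_half).
have : k * (xs - d - 0) < pi / 2.
  apply: phase_gap (lexx 0) _ _ _.
  - by nra.
  - by lra.
  - by rewrite in_itv /= negb_and -!ltNge ltrBlDr ltrDl d_gt0 orbT.
by lra.
Qed.

End Maximum.

Lemma profile_bound (x : R) : x \in `[0, L] ->
  (2 / p * f x `^ (p - 2) - lam) * L ^+ 2 <= pi ^+ 2.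
Proof.
move=> x_in; have [xs xs_in xs_max] := EVT_max (ltW L_gt0) f_cont.
set K := 2 / p * f xs `^ (p - 2) - lam.
have K_ge : 2 / p * f x `^ (p - 2) - lam <= K.
  rewrite lerD2r ler_wpM2l ?divr_ge0 ?(ltW p_gt0) //.
  apply: ge0_ler_powR; rewrite ?nnegrE ?subr_ge0 ?(ltW p_gt2) ?xs_max //.
  - exact/ltW/f_gt0.
  - exact/ltW/f_gt0.
apply: le_trans (_ : K * L ^+ 2 <= _).
  by rewrite ler_wpM2r ?sqr_ge0.
have [K_le0|K_gt0] := leP K 0.
  by apply: le_trans (sqr_ge0 pi); rewrite mulr_le0_ge0 ?sqr_ge0.
have := sqrtK_mul_len_le_pi xs_in xs_max K_gt0.
rewrite -(@ler_pXn2r _ 2) ?nnegrE ?mulr_ge0 ?sqrtr_ge0 ?pi_ge0 ?(ltW L_gt0) //.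
by rewrite exprMn sqr_sqrtr ?(ltW K_gt0).
Qed.

End EdgeProfile.

Definition linf_bound (R : realType) (p lam : R) (l : \bar R) : R :=
  p / 2 * lam + (if l is r%:E then p * pi ^+ 2 / (2 * r ^+ 2) else 0).

Lemma le_linf_bound (R : realType) (p lam m x : R) (l l0 : \bar R) :
  0 < p -> (0 < l0)%E -> (l0 <= l)%E -> (x%:E <= l)%E ->
  (forall L, 0 < L -> x <= L -> (L%:E <= l)%E ->
     (2 / p * m - lam) * L ^+ 2 <= pi ^+ 2) ->
  m <= linf_bound p lam l0.
Proof.
move=> p_gt0 l0_gt0 l0_le x_le bound.
case: l l0_le x_le bound => [r| |] l0_le x_le bound; first last.
- by move: l0_le; rewrite leeNy_eq => /eqP l0_eq; rewrite l0_eq in l0_gt0.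
- have : 2 / p * m - lam <= 0.
    apply: (le0_of_bounded_mulr_sqr (a := Num.max x 1)) => L.
    rewrite ge_max => /andP[x_le_L one_le_L].
    by apply: bound; rewrite ?leey // (lt_le_trans ltr01).
  move/(le_of_scaled_subr_le p_gt0); rewrite mulr0 addr0 => /le_trans; apply.
  rewrite lerDl; case: l0 {l0_le} l0_gt0 => // r1; rewrite lte_fin => r1_gt0.
  by apply: divr_ge0; apply: mulr_ge0 => //; [exact: ltW | exact: sqr_ge0 ..].
case: l0 l0_gt0 l0_le => [r1| |] // r1_gt0 r1_le; rewrite lte_fin in r1_gt0.
rewrite lee_fin in r1_le x_le; have r_gt0 := lt_le_trans r1_gt0 r1_le.
set c := 2 / p * m - lam.
have : c <= pi ^+ 2 / r1 ^+ 2.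
  rewrite ler_pdivlMr ?exprn_gt0 //.
  have [c_le0|c_gt0] := leP c 0.
    by apply: le_trans (sqr_ge0 pi); rewrite mulr_le0_ge0 ?sqr_ge0.
  apply: le_trans (bound r r_gt0 x_le (lexx _)).
  by rewrite ler_wpM2l ?(ltW c_gt0) // ler_pXn2r ?nnegrE ?(ltW r1_gt0) ?(ltW r_gt0).
move/(le_of_scaled_subr_le p_gt0); rewrite /linf_bound.
suff -> : p / 2 * (pi ^+ 2 / r1 ^+ 2) = p * pi ^+ 2 / (2 * r1 ^+ 2) by [].
by field; exact: lt0r_neq0.
Qed.

Lemma solution_edge_bound (R : realType) (E : countType) (len : E -> \bar R)
    (u : E -> R -> R) (p lam : R) (e : E) (x L : R) :
  2 < p -> {within edge_set len e, continuous u e} ->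
  (forall y, edge_set len e y -> 0 < u e y) -> solves_NLS len u p lam ->
  edge_set len e x -> 0 < L -> x <= L -> (L%:E <= len e)%E ->
  (2 / p * u e x `^ (p - 2) - lam) * L ^+ 2 <= pi ^+ 2.
Proof.
move=> p_gt2 u_cont u_gt0 nls [x_ge0 _] L_gt0 x_le L_le.
have sub y : y \in `[0, L] -> edge_set len e y.
  rewrite in_itv /= => /andP[y_ge0 y_le]; split => //.
  by rewrite (le_trans _ L_le) ?lee_fin.
have sub_int y : y \in `]0, L[ -> edge_int len e y.
  rewrite in_itv /= => /andP[y_gt0 y_lt]; split => //.
  by rewrite (lt_le_trans _ L_le) ?lte_fin.
have nls_L y : y \in `]0, L[ -> _ := fun y_in => nls e y (sub_int y y_in).
apply: (profile_bound p_gt2 L_gt0).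
- exact: continuous_subspaceW sub u_cont.
- by move=> y /nls_L[].
- by move=> y /nls_L[].
- by move=> y /nls_L[].
- by move=> y /sub /u_gt0.
- by rewrite in_itv /= x_ge0.
Qed.

Theorem lemma2p5 (R : realType) (V : Type) (E : countType)
  (len : E -> \bar R) (orig term : E -> V) (p lambda : R) (u : E -> R -> R) :
  2 < p ->
  in_class_G len orig term ->
  H1_graph len orig term u ->
  (forall e x, edge_set len e x -> 0 < u e x) ->
  solves_NLS len u p lambda ->
  kirchhoff len orig term u ->
  let B := p / 2 * lambda +
           (if e0 len is r%:E then p * pi ^+ 2 / (2 * r ^+ 2) else 0) in
  0 < B /\ (forall e x, edge_set len e x -> u e x <= B `^ (p - 2)^-1).
Proof.
move=> p_gt2 [[e1 _] len_gt0 _ _ e0_gt0] [u_cont _ _] u_gt0 nls _ B.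
have p_gt0 : 0 < p by exact: lt_trans p_gt2.
have upow_le e x :
    edge_set len e x -> u e x `^ (p - 2) <= linf_bound p lambda (e0 len).
  move=> x_in; have [_ x_le] := x_in.
  apply: (le_linf_bound p_gt0 e0_gt0 _ x_le).
    by apply: ereal_inf_lbound; exists e.
  by move=> L; apply: solution_edge_bound (u_gt0 e) nls x_in.
split.
  have e1_0 : edge_set len e1 0 by split => //; exact/ltW/len_gt0.
  exact: lt_le_trans (powR_gt0 _ (u_gt0 _ _ e1_0)) (upow_le _ _ e1_0).
move=> e x x_in; apply: le_powRV_of_powR_le; rewrite ?subr_gt0 ?upow_le //.
exact: u_gt0.
Qed.
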